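(* Consider the planted clique problem with $\rho\le1/2$. Let $\ell\ge0$ be an integer, $D=2\ell+1$, and $f(Y)=\tau_\ell\Big(\frac{2}{\rho}\Big(\frac{1}{n-1}\sum_{i=2}^nY_{1i}-\frac12\Big)\Big)$. For any $0<r<1$, if $\rho^2\ge\frac{432}{r^2(n-1)}\big[\log4+3D\log(9/\rho)\big]$, then $\mathbb{E}(f(Y)-x)^2\le D^2r^{D-1}$.
   Context: Planted clique problem: $v\in\{0,1\}^n$ has i.i.d. $\mathrm{Bernoulli}(\rho)$ entries, $\rho\in(0,1)$; conditionally on $v$, for each pair $i<j$ independently, $Y_{ij}=1$ if $v_iv_j=1$ and otherwise $Y_{ij}\sim\mathrm{Bernoulli}(1/2)$; $Y_{1i}$ is the entry for pair $\{1,i\}$; target $x=v_1$. $\tau_\ell(y)=(2\ell+1)\binom{2\ell}{\ell}\int_0^yt^\ell(1-t)^\ell\,dt$, a polynomial of degree $2\ell+1$. Logarithms are natural. *)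

From HB Require Import structures.
From mathcomp Require Import all_boot all_order all_algebra.
From mathcomp Require Import all_classical all_reals all_analysis.
Set Implicit Arguments. Unset Strict Implicit. Unset Printing Implicit Defensive.
Import Order.TTheory GRing.Theory Num.Theory.
Import numFieldNormedType.Exports.
Local Open Scope classical_set_scope.
Local Open Scope ring_scope.

Definition oint0 (R : realType) (g : R -> R) (y : R) : R :=
  if 0 <= y then Rintegral lebesgue_measure `[0, y] g
  else - Rintegral lebesgue_measure `[y, 0] g.

Definition tau (R : realType) (l : nat) (y : R) : R :=
  (2 * l + 1)%:R * ('C(2 * l, l))%:R *
    oint0 (fun t : R => t ^+ l * (1 - t) ^+ l) y.

(* Planted clique model on vertex set 'I_n.
   v : {ffun 'I_n -> bool} is the planted indicator vector;
   Y : {ffun 'I_n * 'I_n -> bool}, where only entries Y (i,j) with i < j are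
   the observed pairs; the remaining entries are set deterministically to
   false (probability one), which does not change the law of the pairs. *)
Definition prob_v (R : realType) (n : nat) (rho : R) (v : {ffun 'I_n -> bool}) : R :=
  \prod_(i : 'I_n) (if v i then rho else 1 - rho).

Definition prob_Y_given_v (R : realType) (n : nat) (v : {ffun 'I_n -> bool})
    (Y : {ffun 'I_n * 'I_n -> bool}) : R :=
  \prod_(p : 'I_n * 'I_n)
    (if (p.1 < p.2)%N then
       (if v p.1 && v p.2 then (if Y p then 1 else 0) else 2^-1)
     else (if Y p then 0 else 1)).

Definition pc_expect (R : realType) (n : nat) (rho : R)
    (F : {ffun 'I_n -> bool} -> {ffun 'I_n * 'I_n -> bool} -> R) : R :=
  \sum_(v : {ffun 'I_n -> bool}) \sum_(Y : {ffun 'I_n * 'I_n -> bool})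
    prob_v rho v * @prob_Y_given_v R n v Y * F v Y.

(* The estimator f(Y) = tau_l ( (2/rho) ( (1/(n-1)) sum_{i=2}^n Y_{1i} - 1/2 ) ),
   where vertex 1 is the ordinal v1 (value 0). *)
Definition f_est (R : realType) (n : nat) (v1 : 'I_n) (rho : R) (l : nat)
    (Y : {ffun 'I_n * 'I_n -> bool}) : R :=
  tau l ((2 / rho) *
    ((n - 1)%:R^-1 * (\sum_(i : 'I_n | v1 != i) (Y (v1, i))%:R) - 2^-1)).

From HB Require Import structures.
From mathcomp Require Import all_boot all_order all_algebra.
From mathcomp Require Import all_classical all_reals all_analysis.
From mathcomp Require Import ring lra zify.
Import Order.TTheory GRing.Theory Num.Theory.
Import numFieldNormedType.Exports.
Local Open Scope ring_scope.
Set Implicit Arguments. Unset Strict Implicit. Unset Printing Implicit Defensive.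

(* Write N = n - 1, S = sum_(i >= 2) Y_1i and y = (2/rho) (S/N - 1/2), so that
   f(Y) = tau_l(y).  The proof has four steps.
   1. tau_l = c_l (P - P(0)) where P is the polynomial antiderivative of
      g(t) = t^l (1-t)^l and c_l = (2l+1) binom(2l,l).  Hence tau_l(0) = 0,
      tau_l(1) = 1 (a Beta integral) and, by the mean value theorem, for
      x in {0,1} and u = |y - x|:  |tau_l(y) - x| <= c_l u (u (1+u))^l.
   2. Using u^k <= (k/lam)^k e^(lam u) (k = 2l+2) and (1+u)^(2l) <= e^(2l u):
      (tau_l(y) - x)^2 <= C (e^(a d) + e^(-a d)),  d = y - x, a = lam + 2l,
      C = c_l^2 (k/lam)^k.
   3. Given v_1 = x, d = sum_i (2/(rho N)) (Y_1i - p_x) where the Y_1i are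
      independent Bernoulli(p_x), p_x = 1/2 + rho x/2.  Computing the finite
      expectation in closed form and bounding each centred Bernoulli moment
      generating function by e^(t^2/2) for |t| <= 1/2 gives
      E (f(Y) - x)^2 <= 2 C e^(N t^2/2),  t = 2a/(rho N).
   4. For lam = 8k/r the hypothesis on rho yields |t| <= 1/2 and N t^2 <= l+1,
      and binom(2l,l) <= 4^l turns the bound of step 3 into D^2 r^(D-1). *)

Section TauPolynomial.
Variable R : realType.
Local Open Scope classical_set_scope.
Local Open Scope ring_scope.

Definition antideriv (p : {poly R}) : {poly R} :=
  \poly_(i < (size p).+1) (if i is j.+1 then p`_j / j.+1%:R else 0).

Lemma antiderivK (p : {poly R}) : (antideriv p)^`() = p.
Proof.
apply/polyP => i; rewrite coef_deriv coef_poly ltnS.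
case: ltnP => hi; last by rewrite mul0rn nth_default.
by rewrite -[_ *+ i.+1]mulr_natr divfK // pnatr_eq0.
Qed.

Lemma is_derive_horner (q : {poly R}) (x : R) :
  is_derive x 1 (horner q) (q^`()).[x].
Proof.
have := @derivableP _ _ _ _ _ _ (@derivable_horner _ q x).
by rewrite -derive1E -derivE.
Qed.

Lemma Rintegral_poly (p : {poly R}) (a b : R) : a <= b ->
  Rintegral lebesgue_measure `[a, b] (horner p) =
  (antideriv p).[b] - (antideriv p).[a].
Proof.
rewrite le_eqVlt => /orP[/eqP <-|ab].
  by rewrite set_itv1 Rintegral_set1 subrr.
rewrite /Rintegral (@continuous_FTC2 _ (horner p) (horner (antideriv p))) //.
- by apply: continuous_subspaceT => x; exact: continuous_horner.
- split.
  + by move=> x _; exact: derivable_horner.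
  + exact/cvg_at_right_filter/continuous_horner.
  + exact/cvg_at_left_filter/continuous_horner.
- by move=> x _; rewrite -derivE antiderivK.
Qed.

Lemma poly_mvt (q : {poly R}) (a b : R) : exists xi : R,
  `|xi - a| <= `|b - a| /\ q.[b] - q.[a] = (q^`()).[xi] * (b - a).
Proof.
have qcont u v : {within `[u, v], continuous (horner q)}.
  by apply: continuous_subspaceT => x; exact: continuous_horner.
have dq x (_ : x \in `]a, b[) := is_derive_horner q x.
have dq' x (_ : x \in `]b, a[) := is_derive_horner q x.
have [ab|ba] := leP a b.
  have [c] := MVT_segment ab dq (qcont a b).
  rewrite in_itv /= => /andP[ac cb] ->; exists c; split => //.
  by rewrite !ger0_norm ?subr_ge0 // lerD2r.
have [c] := MVT_segment (ltW ba) dq' (qcont b a).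
rewrite in_itv /= => /andP[bc ca] qba; exists c; split.
  by rewrite !ler0_norm ?subr_le0 ?(ltW ba) // lerN2 lerD2r.
by rewrite -opprB qba -mulrN opprB.
Qed.

Definition beta_poly (l : nat) : {poly R} := 'X^l * (1 - 'X) ^+ l.
Definition tau_prim (l : nat) : {poly R} := antideriv (beta_poly l).
Definition tau_const (l : nat) : R := (2 * l + 1)%:R * ('C(2 * l, l))%:R.

Lemma beta_polyE l (t : R) : (beta_poly l).[t] = t ^+ l * (1 - t) ^+ l.
Proof.
by rewrite /beta_poly hornerM hornerXn horner_exp hornerD hornerN hornerX hornerC.
Qed.

Lemma tau_const_ge0 l : 0 <= tau_const l.
Proof. by rewrite mulr_ge0. Qed.

Lemma tauE l (y : R) :
  tau l y = tau_const l * ((tau_prim l).[y] - (tau_prim l).[0]).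
Proof.
rewrite /tau /oint0.
have -> : (fun t : R => t ^+ l * (1 - t) ^+ l) = horner (beta_poly l).
  by apply: funext => t; rewrite beta_polyE.
case: ifPn => hy; first by rewrite Rintegral_poly.
by rewrite Rintegral_poly ?opprB // ltW // ltNge.
Qed.

Lemma tau0 l : tau l (0 : R) = 0.
Proof. by rewrite tauE subrr mulr0. Qed.

(* c_l is the inverse of the Beta integral B(l+1, l+1) = l!^2/(2l+1)!. *)
Lemma tau1 l : tau l (1 : R) = 1.
Proof.
rewrite /tau /oint0 ler01.
have -> : Rintegral lebesgue_measure `[0, 1] (fun t : R => t ^+ l * (1 - t) ^+ l)
   = beta_fun l.+1 l.+1 by rewrite Rintegral_mkcond.
rewrite beta_fun_fact.
have hl : (l <= 2 * l)%N by rewrite mul2n -addnn leq_addr.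
have hll : (2 * l - l = l)%N by rewrite mul2n -addnn addnK.
have fact_eq : ((2 * l + 1) * 'C(2 * l, l) * (l`! * l`!))%N = ((l + l).+1)`!.
  have := bin_fact hl; rewrite hll -mulnA => ->.
  by rewrite addnn -mul2n factS addn1.
rewrite -natrM mulrA -natrM fact_eq divff // pnatr_eq0 -lt0n fact_gt0.
Qed.

Lemma near_bool_factor (x : bool) (xi u : R) :
  `|xi - x%:R| <= u -> `|xi| * `|1 - xi| <= u * (1 + u).
Proof.
case: x => /=; rewrite ?mulr1n ?subr0 => hxi.
  have h1 : `|1 - xi| <= u by rewrite distrC.
  have h2 : `|xi| <= 1 + u.
    by rewrite -[xi](subrK 1) (le_trans (ler_normD _ _)) // normr1 addrC lerD2l.
  by rewrite mulrC; apply: ler_pM.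
have h2 : `|1 - xi| <= 1 + u.
  by rewrite (le_trans (ler_normB _ _)) // normr1 lerD2l.
by apply: ler_pM.
Qed.

Lemma tau_err l (x : bool) (y : R) :
  `|tau l y - x%:R| <=
  tau_const l * `|y - x%:R| * (`|y - x%:R| * (1 + `|y - x%:R|)) ^+ l.
Proof.
have taux : tau l (x%:R : R) = x%:R by case: x; [exact: tau1 | exact: tau0].
have [xi [hxi mvt]] := poly_mvt (tau_prim l) x%:R y.
have -> : tau l y - x%:R =
    tau_const l * ((tau_prim l).[y] - (tau_prim l).[x%:R]).
  by rewrite -{1}taux !tauE; ring.
rewrite mvt /tau_prim antiderivK beta_polyE normrM ger0_norm ?tau_const_ge0 //.
rewrite -mulrA ler_wpM2l ?tau_const_ge0 // normrM mulrC ler_wpM2l //.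
rewrite normrM !normrX -exprMn; apply: lerXn2r; last exact: near_bool_factor hxi.
  by rewrite nnegrE mulr_ge0.
by rewrite nnegrE mulr_ge0 // addr_ge0.
Qed.

End TauPolynomial.

Section ExponentialBounds.
Variable R : realType.

(* Numerical bounds on e, from e^(-x) >= 1 - x. *)
Lemma expR_half : expR (2^-1 : R) <= 2.
Proof.
have hE := expR_gt0 (2^-1 : R).
have H := expR_ge1Dx (- 2^-1 : R); rewrite expRN in H.
have := ler_wpM2l (ltW hE) H; rewrite mulfV ?gt_eqF //; lra.
Qed.

Lemma expR1_le4 : expR (1 : R) <= 4.
Proof.
rewrite -[1 : R](@divff _ 2) ?pnatr_eq0 // expRM_natl.
apply: (@le_trans _ _ (2 ^+ 2)); last by rewrite expr2; lra.
by apply: lerXn2r; rewrite ?nnegrE ?expR_ge0 ?expR_half.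
Qed.

Lemma expR_le_quad (z : R) : z <= 2^-1 -> expR z <= 1 + z + 2 * z ^+ 2.
Proof.
move=> hz.
have hE := expR_gt0 z.
have H := expR_ge1Dx (- z); rewrite expRN in H.
have := ler_wpM2l (ltW hE) H; rewrite mulfV ?gt_eqF // => H2.
have h3 : 0 <= z ^+ 2 * (1 - 2 * z) by apply: mulr_ge0; [exact: sqr_ge0 | lra].
nra.
Qed.

Lemma bernoulli_mgf_le (p t : R) : 0 <= p <= 1 -> `|t| <= 2^-1 ->
  p * expR (t * (1 - p)) + (1 - p) * expR (- (t * p)) <= expR (t ^+ 2 / 2).
Proof.
move=> /andP[p0 p1]; rewrite ler_norml => /andP[t1 t2].
have q0 : 0 <= 1 - p by lra.
have z1 : t * (1 - p) <= 2^-1.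
  have : 0 <= (2^-1 - t) * (1 - p) by rewrite mulr_ge0 // subr_ge0.
  lra.
have z0 : - (t * p) <= 2^-1.
  have : 0 <= (2^-1 + t) * p by rewrite mulr_ge0 //; lra.
  lra.
have hA := ler_wpM2l p0 (expR_le_quad z1).
have hB := ler_wpM2l q0 (expR_le_quad z0).
have pq : p * (1 - p) <= 4^-1 by have := sqr_ge0 (p - 2^-1); lra.
have t20 : 0 <= t ^+ 2 := sqr_ge0 t.
apply: le_trans (expR_ge1Dx _); apply: le_trans (lerD hA hB) _.
nra.
Qed.

(* u^k <= (k/lam)^k e^(lam u): the maximum of u^k e^(-lam u) is at u = k/lam. *)
Lemma pow_le_expR (u lam : R) k : 0 <= u -> 0 < lam -> (0 < k)%N ->
  u ^+ k <= (k%:R / lam) ^+ k * expR (lam * u).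
Proof.
move=> hu hl hk.
have k0 : 0 < (k%:R : R) by rewrite ltr0n.
set s := lam * u / k%:R.
have s0 : 0 <= s by rewrite /s divr_ge0 // ?mulr_ge0 // ltW.
have hs : s <= expR s by apply: le_trans (expR_ge1Dx s); lra.
have -> : u = (k%:R / lam) * s by rewrite /s; field; rewrite !gt_eqF.
have -> : lam * (k%:R / lam * s) = k%:R * s by field; rewrite gt_eqF.
rewrite exprMn expRM_natl; apply: ler_wpM2l.
  by apply: exprn_ge0; rewrite divr_ge0 // ltW.
by apply: lerXn2r; rewrite ?nnegrE // expR_ge0.
Qed.

Lemma onep_pow_le_expR (u : R) m : -1 <= u -> (1 + u) ^+ m <= expR (m%:R * u).
Proof.
move=> hu; rewrite expRM_natl; apply: lerXn2r; rewrite ?nnegrE ?expR_ge0 //.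
  by lra.
exact: expR_ge1Dx.
Qed.

Lemma expR_norm_le (a d : R) :
  expR (a * `|d|) <= expR (a * d) + expR (- (a * d)).
Proof.
have h1 := expR_gt0 (a * d); have h2 := expR_gt0 (- (a * d)).
have [hd|hd] := lerP 0 d; first by rewrite ger0_norm //; lra.
by rewrite ltr0_norm // mulrN; lra.
Qed.

Lemma tau_sq_err_le_exp l (x : bool) (y lam : R) : 0 < lam ->
  (tau l y - x%:R) ^+ 2 <=
  tau_const R l ^+ 2 * ((2 * l + 2)%:R / lam) ^+ (2 * l + 2) *
    (expR ((lam + (2 * l)%:R) * (y - x%:R)) +
     expR (- ((lam + (2 * l)%:R) * (y - x%:R)))).
Proof.
move=> lam0; set u := `|y - x%:R|.
have u0 : 0 <= u := normr_ge0 _.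
have uu0 : 0 <= u * (1 + u) by rewrite mulr_ge0 // addr_ge0.
rewrite -real_normK ?num_real //.
apply: le_trans (_ : (tau_const R l * u * (u * (1 + u)) ^+ l) ^+ 2 <= _).
  apply: lerXn2r; last exact: tau_err.
    by rewrite nnegrE.
  by rewrite nnegrE !mulr_ge0 ?tau_const_ge0 ?exprn_ge0.
have -> : (tau_const R l * u * (u * (1 + u)) ^+ l) ^+ 2 =
    tau_const R l ^+ 2 * (u ^+ (2 * l + 2) * (1 + u) ^+ (2 * l)).
  by rewrite exprD !exprMn -!exprM (mulnC l 2); ring.
rewrite -mulrA ler_wpM2l ?sqr_ge0 //.
apply: (@le_trans _ _
  (((2 * l + 2)%:R / lam) ^+ (2 * l + 2) * expR ((lam + (2 * l)%:R) * u))).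
  rewrite mulrDl expRD mulrA; apply: ler_pM; rewrite ?exprn_ge0 ?addr_ge0 //.
    by apply: pow_le_expR; rewrite // addn2.
  by apply: onep_pow_le_expR; lra.
rewrite ler_wpM2l ?expR_norm_le //.
by apply: exprn_ge0; rewrite divr_ge0 // ltW.
Qed.

End ExponentialBounds.

Definition bern (R : realFieldType) (rho : R) (b : bool) : R :=
  if b then rho else 1 - rho.

Lemma bern_ge0 (R : realFieldType) (rho : R) (b : bool) :
  0 <= rho <= 1 -> 0 <= bern rho b.
Proof. by case/andP=> r0 r1; case: b; rewrite /bern ?subr_ge0. Qed.

(* Conditional expectation of h(Y_1i) given v_1 = a and v_i = b. *)
Definition edge_mean (R : realFieldType) (h : bool -> R) (a b : bool) : R :=
  if a && b then h true else (h true + h false) / 2.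

Definition edge_prob (R : realFieldType) (rho : R) (x : bool) : R :=
  2^-1 + rho * x%:R / 2.

(* Averaging over v_i: given v_1 = x, Y_1i is Bernoulli(edge_prob rho x). *)
Lemma edge_law (R : realFieldType) (rho : R) (x : bool) (h : bool -> R) :
  bern rho true * edge_mean h x true + bern rho false * edge_mean h x false =
  edge_prob rho x * h true + (1 - edge_prob rho x) * h false.
Proof. by rewrite /bern /edge_mean /edge_prob; case: x => /=; field. Qed.

Lemma edge_prob_itv (R : realFieldType) (rho : R) (x : bool) :
  0 <= rho <= 1 -> 0 <= edge_prob rho x <= 1.
Proof. by move=> /andP[r0 r1]; rewrite /edge_prob; case: x => /=; lra. Qed.

Lemma prod_row (R : comRingType) (T : finType) (a : T) (F : T -> R) :
  \prod_(p : T * T) (if (p.1 == a) && (p.2 != a) then F p.2 else 1) =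
  \prod_(j | a != j) F j.
Proof.
rewrite -(pair_bigA _ (fun i j => if (i == a) && (j != a) then F j else 1)) /=.
rewrite (bigD1 a) //= [X in _ * X]big1 ?mulr1; last first.
  by move=> i hi; apply: big1 => j _; rewrite (negbTE hi).
by rewrite [RHS]big_mkcond /=; apply: eq_bigr => j _; rewrite eqxx /= eq_sym.
Qed.

Lemma card_neq (n : nat) (v1 : 'I_n) : #|[pred i | v1 != i]| = (n - 1)%N.
Proof.
rewrite -[n in RHS]card_ord subn1 -(cardC1 v1); apply: eq_card => i.
by rewrite !inE eq_sym.
Qed.

Section PlantedClique.
Variables (R : realType) (n : nat) (v1 : 'I_n).
Hypothesis v1_eq0 : v1 = 0 :> nat.
Variable rho : R.
Hypotheses (rho_gt0 : 0 < rho) (rho_le1 : rho <= 1).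
Local Notation vT := {ffun 'I_n -> bool}.
Local Notation yT := {ffun 'I_n * 'I_n -> bool}.

Lemma prob_v_ge0 (v : vT) : 0 <= prob_v rho v.
Proof.
by apply: prodr_ge0 => i _; case: (v i); rewrite ?subr_ge0 // ltW.
Qed.

Lemma prob_Y_ge0 (v : vT) (Y : yT) : 0 <= prob_Y_given_v R v Y.
Proof.
apply: prodr_ge0 => p _; case: ifP => _; last by case: (Y p).
by case: ifP => _; [case: (Y p) | rewrite invr_ge0].
Qed.

Lemma pc_le (F G : vT -> yT -> R) : (forall v Y, F v Y <= G v Y) ->
  pc_expect rho F <= pc_expect rho G.
Proof.
move=> FG; apply: ler_sum => v _; apply: ler_sum => Y _.
by rewrite ler_wpM2l // mulr_ge0 ?prob_v_ge0 ?prob_Y_ge0.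
Qed.

Lemma pc_add (F G : vT -> yT -> R) :
  pc_expect rho (fun v Y => F v Y + G v Y) = pc_expect rho F + pc_expect rho G.
Proof.
rewrite /pc_expect -big_split; apply: eq_bigr => v _.
by rewrite -big_split; apply: eq_bigr => Y _; exact: mulrDr.
Qed.

Lemma pc_scale (c : R) (F : vT -> yT -> R) :
  pc_expect rho (fun v Y => c * F v Y) = c * pc_expect rho F.
Proof.
rewrite /pc_expect mulr_sumr; apply: eq_bigr => v _.
by rewrite mulr_sumr; apply: eq_bigr => Y _; ring.
Qed.

Lemma pc_expect_by_root (F : vT -> yT -> R) :
  pc_expect rho F =
  \sum_(x : bool) pc_expect rho (fun v Y => (v v1 == x)%:R * F v Y).
Proof.
rewrite big_bool /= -pc_add; congr pc_expect; apply: funext => v; apply: funext => Y.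
by case: (v v1); rewrite /= mul1r mul0r ?addr0 ?add0r.
Qed.

(* Integrating out Y: given v, the observations Y_1j are independent with
   conditional means edge_mean h (v v1) (v j). *)
Lemma sum_Y_row_prod (v : vT) (h : bool -> R) :
  \sum_(Y : yT) prob_Y_given_v R v Y * \prod_(i | v1 != i) h (Y (v1, i)) =
  \prod_(j | v1 != j) edge_mean h (v v1) (v j).
Proof.
pose w (p : 'I_n * 'I_n) (c : bool) : R :=
  (if (p.1 < p.2)%N then
     (if v p.1 && v p.2 then (if c then 1 else 0) else 2^-1)
   else (if c then 0 else 1)) *
  (if (p.1 == v1) && (p.2 != v1) then h c else 1).
rewrite (eq_bigr (fun Y : yT => \prod_p w p (Y p))); last first.
  move=> Y _; rewrite -(prod_row v1 (fun i => h (Y (v1, i)))) -big_split /=.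
  by apply: eq_bigr => -[i j] _; rewrite /w /=; case: eqP => [->|].
rewrite -(bigA_distr_bigA w) /= -prod_row; apply: eq_bigr => -[i j] _ /=.
rewrite big_bool /w /=.
case: eqP => [->|_] /=; last first.
  by case: ifP => _; [case: ifP => _|]; rewrite !mulr1 ?addr0 ?add0r //; lra.
case: eqP => [->|hj] /=; first by rewrite ltnn !mulr1 add0r.
have -> : (v1 < j)%N.
  by rewrite v1_eq0 lt0n; apply/eqP => j0; apply/hj/val_inj; rewrite /= j0.
rewrite /edge_mean; case: (v v1 && v j); rewrite ?mul1r ?mul0r ?addr0 //.
by rewrite -mulrDr mulrC.
Qed.

(* Integrating out v: the bits v_j, j != 1, are independent Bernoulli(rho). *)
Lemma sum_v_row_prod (x : bool) (h : bool -> R) :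
  \sum_(v : vT) prob_v rho v * (v v1 == x)%:R *
     \prod_(j | v1 != j) edge_mean h (v v1) (v j) =
  bern rho x * (bern rho true * edge_mean h x true +
                bern rho false * edge_mean h x false) ^+ (n - 1).
Proof.
pose U (i : 'I_n) (b : bool) := if i == v1 then bern rho b * (b == x)%:R
                                else bern rho b * edge_mean h x b.
transitivity (\sum_(v : vT) \prod_i U i (v i)).
  apply: eq_bigr => v _.
  rewrite /prob_v (bigD1 v1) //= [RHS](bigD1 v1) //= {1}/U eqxx.
  rewrite (eq_bigl (fun j => j != v1) (fun j => edge_mean h (v v1) (v j)));
    last by move=> j; rewrite eq_sym.
  case: eqP => [->|_]; last by rewrite /= mulr0n; ring.
  rewrite /= mulr1n !mulr1 /bern -mulrA -big_split /=; congr (_ * _).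
  by apply: eq_bigr => i hi; rewrite /U (negbTE hi).
rewrite -(bigA_distr_bigA U) /= (bigD1 v1) //= big_bool /U eqxx /=.
rewrite (eq_bigr (fun _ => bern rho true * edge_mean h x true +
                           bern rho false * edge_mean h x false)); last first.
  by move=> i hi; rewrite big_bool (negbTE hi).
rewrite (eq_bigl [pred i | v1 != i]); last by move=> i; rewrite /= eq_sym.
rewrite prodr_const card_neq; congr (_ * _); clear U.
by case: x; rewrite /= ?mulr1 ?mulr0 ?addr0 ?add0r.
Qed.

Lemma pc_expect_row_prod (x : bool) (h : bool -> R) :
  pc_expect rho (fun v Y => (v v1 == x)%:R * \prod_(i | v1 != i) h (Y (v1, i))) =
  bern rho x * (edge_prob rho x * h true + (1 - edge_prob rho x) * h false)
    ^+ (n - 1).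
Proof.
rewrite -edge_law /pc_expect -(sum_v_row_prod x); apply: eq_bigr => v _.
rewrite -sum_Y_row_prod mulr_sumr; apply: eq_bigr => Y _.
by rewrite mulrA mulrAC [RHS]mulrAC -!mulrA.
Qed.

Definition tilted_weight (t : R) (x : bool) (Y : yT) : R :=
  \prod_(i | v1 != i) expR (t * ((Y (v1, i))%:R - edge_prob rho x)).

Lemma pc_expect_tilted_le (x : bool) (t : R) : `|t| <= 2^-1 ->
  pc_expect rho (fun v Y => (v v1 == x)%:R * tilted_weight t x Y) <=
  bern rho x * expR ((n - 1)%:R * (t ^+ 2 / 2)).
Proof.
move=> ht; rewrite /tilted_weight.
rewrite (pc_expect_row_prod x (fun b => expR (t * (b%:R - edge_prob rho x)))).
have r01 : 0 <= rho <= 1 by rewrite rho_le1 ltW.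
have p01 := edge_prob_itv x r01; have /andP[p0 p1] := p01.
rewrite expRM_natl ler_wpM2l ?bern_ge0 //.
apply: lerXn2r; rewrite ?nnegrE ?expR_ge0 //.
  by rewrite addr_ge0 // mulr_ge0 ?expR_ge0 ?subr_ge0.
by rewrite /= mulr1n mulr0n sub0r mulrN; exact: bernoulli_mgf_le p01 ht.
Qed.

Hypothesis n_ge2 : (2 <= n)%N.

Lemma estimator_centred_sum (x : bool) (Y : yT) :
  (2 / rho) * ((n - 1)%:R^-1 * (\sum_(i : 'I_n | v1 != i) (Y (v1, i))%:R) - 2^-1)
    - x%:R =
  \sum_(i : 'I_n | v1 != i)
    (2 / (rho * (n - 1)%:R)) * ((Y (v1, i))%:R - edge_prob rho x).
Proof.
have N0 : (n - 1)%:R != 0 :> R by rewrite pnatr_eq0 subn_eq0 -ltnNge.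
rewrite -mulr_sumr sumrB sumr_const card_neq /edge_prob -mulr_natr.
by field; rewrite N0 gt_eqF.
Qed.

(* The tilt t = 2 (lam + 2l) / (rho N) produced by steps 1-2. *)
Definition tilt (l : nat) (lam : R) : R :=
  (lam + (2 * l)%:R) * (2 / (rho * (n - 1)%:R)).

Lemma sq_err_le_tilted l (x : bool) (lam : R) (Y : yT) : 0 < lam ->
  (f_est v1 rho l Y - x%:R) ^+ 2 <=
  tau_const R l ^+ 2 * ((2 * l + 2)%:R / lam) ^+ (2 * l + 2) *
    (tilted_weight (tilt l lam) x Y + tilted_weight (- tilt l lam) x Y).
Proof.
move=> lam0; apply: le_trans (tau_sq_err_le_exp l x _ lam0) _.
rewrite estimator_centred_sum -mulNr !mulr_sumr !expR_sum /tilted_weight /tilt.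
under eq_bigr do rewrite mulrA.
under [X in _ + X]eq_bigr do rewrite mulrA mulNr.
exact: lexx.
Qed.

Lemma estimator_mse_le l (lam : R) : 0 < lam -> `|tilt l lam| <= 2^-1 ->
  pc_expect rho (fun v Y => (f_est v1 rho l Y - (v v1)%:R) ^+ 2) <=
  2 * (tau_const R l ^+ 2 * ((2 * l + 2)%:R / lam) ^+ (2 * l + 2)) *
    expR ((n - 1)%:R * (tilt l lam ^+ 2 / 2)).
Proof.
move=> lam0 ht; set t := tilt l lam; set C := _ * _ ^+ _; set E := expR _.
have C0 : 0 <= C by rewrite /C mulr_ge0 ?sqr_ge0 // exprn_ge0 // divr_ge0 // ltW.
have root_le (x : bool) : pc_expect rho (fun v Y =>
    (v v1 == x)%:R * (f_est v1 rho l Y - (v v1)%:R) ^+ 2) <= 2 * C * E * bern rho x.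
  apply: le_trans (_ : pc_expect rho (fun v Y =>
      C * ((v v1 == x)%:R * tilted_weight t x Y) +
      C * ((v v1 == x)%:R * tilted_weight (- t) x Y)) <= _).
    apply: pc_le => v Y; case: eqP => [->|_]; last by rewrite !mul0r mulr0 addr0.
    by rewrite !mul1r -mulrDr; exact: sq_err_le_tilted.
  rewrite pc_add !pc_scale.
  have ht' : `|- t| <= 2^-1 by rewrite normrN.
  apply: le_trans (lerD (ler_wpM2l C0 (pc_expect_tilted_le x ht))
                         (ler_wpM2l C0 (pc_expect_tilted_le x ht'))) _.
  by rewrite sqrrN /E le_eqVlt; apply/orP; left; apply/eqP; ring.
rewrite pc_expect_by_root big_bool.
apply: le_trans (lerD (root_le true) (root_le false)) _.
by rewrite -mulrDr /bern addrC subrK mulr1.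
Qed.

End PlantedClique.

Lemma bin_le_exp2 m k : ('C(m, k) <= 2 ^ m)%N.
Proof.
elim: m k => [|m IH] [|k] //=; first by rewrite bin0 expn_gt0.
by rewrite binS expnS mul2n -addnn leq_add.
Qed.

Lemma central_bin_bound l : (2 * 'C(2 * l, l) ^ 2 * 2 ^ (l + 1) <= 8 ^ (2 * l + 2))%N.
Proof.
have hC : ('C(2 * l, l) ^ 2 <= 2 ^ (4 * l))%N.
  rewrite (_ : 4 * l = 2 * l * 2)%N; last lia.
  by rewrite expnM leq_exp2r // bin_le_exp2.
apply: (@leq_trans (2 * 2 ^ (4 * l) * 2 ^ (l + 1))).
  by apply: leq_mul => //; apply: leq_mul.
rewrite -expnS -expnD; apply: (@leq_trans (2 ^ (3 * (2 * l + 2)))).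
  by rewrite leq_exp2l //; lia.
by rewrite expnM.
Qed.

Section ParameterChoice.
Variable R : realType.

Lemma rho_condition (rho r N : R) (D : nat) :
  0 < rho -> rho <= 2^-1 -> 0 < r -> 0 < N -> (0 < D)%N ->
  432 / (r ^+ 2 * N) * (ln 4 + 3 * D%:R * ln (9 / rho)) <= rho ^+ 2 ->
  1296 * D%:R <= rho ^+ 2 * (r ^+ 2 * N).
Proof.
move=> r0 r1 rpos N0 D0 H.
have L1 : 0 <= ln (4 : R) by apply: ln_ge0; lra.
have L2 : 1 <= ln (9 / rho).
  rewrite -[X in X <= _](expRK 1) ler_ln ?posrE ?expR_gt0 ?divr_gt0 //.
  by apply: le_trans (expR1_le4 R) _; rewrite ler_pdivlMr //; lra.
have D1 : 1 <= D%:R :> R by rewrite ler1n.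
have rN0 : 0 < r ^+ 2 * N by rewrite mulr_gt0 // exprn_gt0.
have := ler_wpM2r (ltW rN0) H; rewrite mulrAC divfK ?gt_eqF //; nra.
Qed.

(* For lam = 8k/r (k = 2l+2) the coefficient a = lam + 2l satisfies a r <= 9k. *)
Lemma tilt_coef_bound (r : R) l : 0 < r -> r <= 1 ->
  0 <= 8 * (2 * l + 2)%:R / r + (2 * l)%:R /\
  (8 * (2 * l + 2)%:R / r + (2 * l)%:R) * r <= 9 * (2 * l + 2)%:R.
Proof.
move=> r0 r1; split; first by rewrite addr_ge0 // divr_ge0 // ltW.
rewrite mulrDl divfK ?gt_eqF // natrD.
have : (2 * l)%:R * r <= (2 * l)%:R :> R by rewrite ler_piMr.
lra.
Qed.

Lemma tilt_bounds (rho r N a : R) (l : nat) :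
  0 < rho -> rho <= 1 -> 0 < r -> r <= 1 -> 0 < N -> 0 <= a ->
  a * r <= 9 * (2 * l + 2)%:R ->
  1296 * (2 * l + 1)%:R <= rho ^+ 2 * (r ^+ 2 * N) ->
  `|a * (2 / (rho * N))| <= 2^-1 /\
  N * ((a * (2 / (rho * N))) ^+ 2 / 2) * 2 <= (l + 1)%:R.
Proof.
move=> rho0 rho1 r0 r1 N0 a0 ar H.
set L : R := l%:R.
have L0 : 0 <= L by rewrite /L ler0n.
have hK : (2 * l + 2)%:R = 2 * L + 2 :> R by rewrite natrD natrM.
have hD : (2 * l + 1)%:R = 2 * L + 1 :> R by rewrite natrD natrM.
rewrite hK in ar; rewrite hD in H; rewrite natrD -/L.
have M0 : 0 < rho * N by rewrite mulr_gt0.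
have -> : a * (2 / (rho * N)) = 2 * a / (rho * N) by rewrite mulrCA mulrA.
have a4 : 4 * a <= rho * N.
  have r2 : 0 < r ^+ 2 by rewrite exprn_gt0.
  have h1 : 4 * a * r ^+ 2 <= 36 * (2 * L + 2) by nra.
  have h2 : rho ^+ 2 * (r ^+ 2 * N) <= rho * N * r ^+ 2 by nra.
  by rewrite -(ler_pM2r r2); lra.
split.
  rewrite ger0_norm; last by rewrite divr_ge0 ?mulr_ge0 // ltW.
  by rewrite ler_pdivrMr //; lra.
set E := N * _ * 2.
have E0 : 0 <= E by rewrite /E !mulr_ge0 ?sqr_ge0 ?invr_ge0 ?ler0n // ltW.
have key : E * (rho ^+ 2 * (r ^+ 2 * N)) = 4 * (a * r) ^+ 2.
  by rewrite /E; field; rewrite !gt_eqF.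
have ar0 : 0 <= a * r by rewrite mulr_ge0 // ltW.
have := ler_wpM2l E0 H; rewrite key; nra.
Qed.

Lemma final_estimate l (r E : R) : 0 < r -> r <= 1 -> E * 2 <= (l + 1)%:R ->
  2 * (tau_const R l ^+ 2 * (r / 8) ^+ (2 * l + 2)) * expR E <=
  (2 * l + 1)%:R ^+ 2 * r ^+ (2 * l).
Proof.
move=> r0 r1 hE.
have hexp : expR E <= 2 ^+ (l + 1).
  apply: le_trans (_ : expR ((l + 1)%:R * 2^-1) <= _).
    by rewrite ler_expR; lra.
  by rewrite expRM_natl; apply: lerXn2r; rewrite ?nnegrE ?expR_ge0 ?expR_half.
have hbin : 2 * ('C(2 * l, l))%:R ^+ 2 * 2 ^+ (l + 1) <= 8 ^+ (2 * l + 2) :> R.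
  by have := central_bin_bound l; rewrite -(ler_nat R) !natrM !natrX.
set B := ('C(2 * l, l))%:R in hbin; set D := (2 * l + 1)%:R.
have K0 : 0 < (8 : R) ^+ (2 * l + 2) by rewrite exprn_gt0.
have r2 : r ^+ 2 <= 1 by rewrite expr_le1 // ltW.
have Q0 : 0 <= D ^+ 2 * r ^+ (2 * l) by rewrite mulr_ge0 ?sqr_ge0 ?exprn_ge0 // ltW.
have -> : 2 * (tau_const R l ^+ 2 * (r / 8) ^+ (2 * l + 2)) * expR E =
    D ^+ 2 * r ^+ (2 * l) * (r ^+ 2 * (2 * B ^+ 2 * expR E / 8 ^+ (2 * l + 2))).
  by rewrite /tau_const expr_div_n exprD; field; rewrite gt_eqF.
rewrite -[X in _ <= X]mulr1 ler_wpM2l //.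
apply: mulr_ile1 => //; first exact: sqr_ge0.
  by rewrite divr_ge0 ?exprn_ge0 // !mulr_ge0 ?sqr_ge0 ?expR_ge0.
rewrite ler_pdivrMr // mul1r; apply: le_trans hbin.
by rewrite ler_wpM2l // mulr_ge0 ?sqr_ge0.
Qed.

End ParameterChoice.

Theorem mainTheorem14 (R : realType) (n : nat) (hn : (2 <= n)%N)
    (rho : R) (hrho0 : 0 < rho) (hrho1 : rho < 1) (hrho2 : rho <= 2^-1)
    (l : nat) (r : R) (hr0 : 0 < r) (hr1 : r < 1) :
  let D := (2 * l + 1)%N in
  let v1 : 'I_n := Ordinal (ltnW hn) in
  rho ^+ 2 >= 432 / (r ^+ 2 * (n - 1)%:R) *
                (ln 4 + 3 * D%:R * ln (9 / rho)) ->
  pc_expect rho (fun v Y => (f_est v1 rho l Y - (v v1)%:R) ^+ 2)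
    <= D%:R ^+ 2 * r ^+ (D - 1).
Proof.
move=> D v1 H.
have N0 : 0 < (n - 1)%:R :> R by rewrite ltr0n subn_gt0.
have D0 : (0 < D)%N by rewrite /D addn1.
have hD := rho_condition hrho0 hrho2 hr0 N0 D0 H.
have [a0 ar] := tilt_coef_bound l hr0 (ltW hr1).
have [ht hNt] := tilt_bounds hrho0 (ltW hrho1) hr0 (ltW hr1) N0 a0 ar hD.
set lam : R := 8 * (2 * l + 2)%:R / r in ht hNt.
have lam0 : 0 < lam by rewrite divr_gt0 // mulr_gt0 // ltr0n addn2.
apply: le_trans (estimator_mse_le (v1 := v1) erefl hrho0 (ltW hrho1) hn lam0 ht) _.
have -> : (2 * l + 2)%:R / lam = r / 8.
  by rewrite /lam; field; rewrite !gt_eqF // ltr0n addn2.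
by rewrite /D addnK; exact: final_estimate hr0 (ltW hr1) hNt.
Qed.
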